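(* Let $\mathcal{X}$ be a connected $n$-premaniplex with base flag $x_0$ and $N=\operatorname{Stab}_{\mathcal{C}^n}(x_0)$, and let $(\mathcal{Y},\eta)$ be an $(n,m)$-voltage operator that preserves connectivity, with base flag $y_0$ of $\mathcal{Y}$, $L=\operatorname{Stab}_{\mathcal{C}^m}(y_0)$ and $\zeta:L\to\mathcal{C}^n$, $\zeta(\omega)=\eta(W_\omega(y_0))$. For $\upsilon\in\mathcal{C}^m$ let $\mathcal{Z}_\upsilon=\mathcal{C}^n/\zeta(L\cap L^\upsilon)$. If for every $\upsilon\in\mathcal{C}^m\setminus\operatorname{N}_{\mathcal{C}^m}(L)$ the premaniplex $\mathcal{X}$ does not cover $\mathcal{Z}_\upsilon$, then every automorphism of $\mathcal{X}\rtimes_\eta\mathcal{Y}$ is a lift of an automorphism of $\mathcal{Y}$.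
   Context: An $n$-premaniplex is an edge-coloured graph (semi-edges and parallel edges allowed) with colours $\{0,\dots,n-1\}$ such that every vertex (flag) is the start of exactly one dart of each colour, and for $|i-j|\ge2$ alternating $i,j$-paths of length 4 are closed; $x^i$ is the $i$-adjacent flag of $x$. $\mathcal{C}^n=\langle r_0,\dots,r_{n-1}\mid r_i^2,\ (r_ir_j)^2\ (|i-j|\ge2)\rangle$ acts on the left on flags by $r_ix=x^i$; automorphisms act on the right. A covering is a surjective map of flags preserving all adjacencies. $L^\upsilon=\upsilon^{-1}L\upsilon$ and $\operatorname{N}_{\mathcal{C}^m}(L)$ is the normaliser. For a subgroup $K\le\mathcal{C}^n$, $\mathcal{C}^n/K$ has flags the left cosets $\omega K$ with $(\omega K)^i=r_i\omega K$. For a flag $y$ of an $m$-premaniplex $\mathcal{Y}$ and $\omega\in\mathcal{C}^m$, $W_\omega(y)$ is the homotopy class of paths from $y$ whose colour sequence $i_1,\dots,i_k$ satisfies $r_{i_k}\cdots r_{i_1}=\omega$; these form the fundamental groupoid $\Pi(\mathcal{Y})$. A voltage assignment $\eta:\Pi(\mathcal{Y})\to\mathcal{C}^n$ satisfies $\eta(W_1W_2)=\eta(W_2)\eta(W_1)$; $(\mathcal{Y},\eta)$ is an $(n,m)$-voltage operator. $\mathcal{X}\rtimes_\eta\mathcal{Y}$ has flags $\mathcal{X}\times\mathcal{Y}$ and $(x,y)^i=(\eta(W_{r_i}(y))x,r_iy)$, $i\in\{0,\dots,m-1\}$. The operator preserves connectivity if $\mathcal{X}\rtimes_\eta\mathcal{Y}$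 is connected whenever $\mathcal{X}$ is. $\gamma\in\operatorname{Aut}(\mathcal{X}\rtimes_\eta\mathcal{Y})$ is a lift of $\tau\in\operatorname{Aut}(\mathcal{Y})$ if the $\mathcal{Y}$-coordinate of $(x,y)\gamma$ is $y\tau$ for all $(x,y)$. Standing convention: $\mathcal{Y}$ has a spanning tree all of whose darts have trivial voltage. *)

From Stdlib Require Import Relations PropExtensionality FunctionalExtensionality.
From HB Require Import structures.
From mathcomp Require Import all_boot.

Set Implicit Arguments.
Unset Strict Implicit.
Unset Printing Implicit Defensive.

(* The group C^n = < r_0..r_{n-1} | r_i^2, (r_i r_j)^2 (|i-j|>=2) >.  *)
(* An element is represented by a word [:: a1; ...; ak] standing for   *)
(* the product r_{a1} r_{a2} ... r_{ak}; multiplication is              *)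
(* concatenation, the inverse of a word is its reversal, and equality *)
(* in C^n is the congruence [ceq] generated by the defining relators. *)

Definition word (n : nat) := seq 'I_n.

Definition far n (i j : 'I_n) : bool := (i + 2 <= j)%N || (j + 2 <= i)%N.

Inductive cstep (n : nat) : word n -> word n -> Prop :=
| cstep_sq (u v : word n) (i : 'I_n) :
    cstep (u ++ [:: i; i] ++ v) (u ++ v)
| cstep_far (u v : word n) (i j : 'I_n) :
    far i j -> cstep (u ++ [:: i; j; i; j] ++ v) (u ++ v).

Definition ceq (n : nat) : relation (word n) :=
  clos_refl_sym_trans (word n) (@cstep n).

Lemma ceq_refl n (w : word n) : ceq w w.
Proof. exact: rst_refl. Qed.

Lemma ceq_trans n (a b c : word n) : ceq a b -> ceq b c -> ceq a c.
Proof. exact: rst_trans. Qed.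

Lemma ceq_cons n (i : 'I_n) (w w' : word n) : ceq w w' -> ceq (i :: w) (i :: w').
Proof.
elim=> {w w'} [w w' s| w | w w' _ IH | w1 w2 w3 _ IH1 _ IH2].
- apply: rst_step; case: s => [u v j|u v j k h].
  + exact: (cstep_sq (i :: u) v j).
  + exact: (cstep_far (i :: u) v h).
- exact: rst_refl.
- exact: rst_sym.
- exact: rst_trans IH1 IH2.
Qed.

(* Premaniplexes.  A flag-graph with colours 'I_n in which every flag *)
(* starts exactly one dart of each colour is given by the i-adjacent  *)
(* flag maps  x |-> x^i (semi-edges: x^i = x; parallel edges allowed). *)

Record premaniplex (n : nat) := Premaniplex {
  flag :> Type;
  adj : 'I_n -> flag -> flag
}.
Arguments adj {n X} i x : rename.

Definition is_premaniplex n (X : premaniplex n) : Prop :=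
  (forall (i : 'I_n) (x : X), adj i (adj i x) = x) /\
  (forall (i j : 'I_n) (x : X), far i j -> adj j (adj i (adj j (adj i x))) = x).

Definition act n (X : premaniplex n) (w : word n) (x : X) : X :=
  foldr (fun i y => adj i y) x w.

Definition connected n (X : premaniplex n) : Prop :=
  forall x y : X, exists w : word n, act w x = y.

Definition covers n (X Z : premaniplex n) : Prop :=
  exists f : X -> Z,
    (forall (i : 'I_n) (x : X), f (adj i x) = adj i (f x)) /\
    (forall z : Z, exists x : X, f x = z).

Definition is_automorphism n (X : premaniplex n) (g : X -> X) : Prop :=
  bijective g /\ forall (i : 'I_n) (x : X), g (adj i x) = adj i (g x).

(* Voltage assignments.  The element W_omega(y) of the fundamental    *)
(* groupoid Pi(Y) is the pair (y, omega), omega in C^m; so a voltage   *)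
(* assignment is eta : Y -> word m -> word n, well defined on C^m,     *)
(* with eta(W1 W2) = eta(W2) eta(W1), i.e. for W1 = W_w(y) and         *)
(* W2 = W_w'(w y):  eta(y, w' w) = eta(w y, w') eta(y, w).             *)

Definition voltage_assignment n m (Y : premaniplex m)
    (eta : Y -> word m -> word n) : Prop :=
  (forall (y : Y) (w w' : word m), ceq w w' -> ceq (eta y w) (eta y w')) /\
  (forall (y : Y) (w w' : word m),
      ceq (eta y (w' ++ w)) (eta (act w y) w' ++ eta y w)).

(* Standing convention: Y has a spanning tree all of whose darts have *)
(* trivial voltage.  A spanning tree is encoded as a rooted tree: a   *)
(* root r, and for every other flag y a parent edge of colour par y   *)
(* leading to y^(par y), with a depth function strictly decreasing    *)
(* towards the root.                                                  *)
Definition trivial_spanning_tree n m (Y : premaniplex m)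
    (eta : Y -> word m -> word n) : Prop :=
  exists (r : Y) (par : Y -> 'I_m) (depth : Y -> nat),
    forall y : Y, y <> r ->
      (depth (adj (par y) y) < depth y)%N /\ ceq (eta y [:: par y]) [::].

Definition voltage_operator n m (Y : premaniplex m)
    (eta : Y -> word m -> word n) : Prop :=
  is_premaniplex Y /\ voltage_assignment eta /\ trivial_spanning_tree eta.

Definition mix n m (X : premaniplex n) (Y : premaniplex m)
    (eta : Y -> word m -> word n) : premaniplex m :=
  @Premaniplex m (X * Y)%type
    (fun i p => (act (eta p.2 [:: i]) p.1, adj i p.2)).
Arguments mix {n m} X Y eta.

Definition preserves_connectivity n m (Y : premaniplex m)
    (eta : Y -> word m -> word n) : Prop :=
  forall X : premaniplex n, is_premaniplex X -> connected X ->
    connected (mix X Y eta).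

Definition is_lift n m (X : premaniplex n) (Y : premaniplex m)
    (eta : Y -> word m -> word n) (g : mix X Y eta -> mix X Y eta)
    (tau : Y -> Y) : Prop :=
  forall p : mix X Y eta, (g p).2 = tau p.2.

Definition stab m (Y : premaniplex m) (y0 : Y) : word m -> Prop :=
  fun w => act w y0 = y0.

Definition conj_set m (L : word m -> Prop) (u : word m) : word m -> Prop :=
  fun w => exists l, L l /\ ceq w (rev u ++ l ++ u).

Definition in_normaliser m (L : word m -> Prop) (u : word m) : Prop :=
  forall w, conj_set L u w <-> L w.

Definition zeta_img n m (Y : premaniplex m) (eta : Y -> word m -> word n)
    (y0 : Y) (S : word m -> Prop) : word n -> Prop :=
  fun w => exists v, S v /\ ceq w (eta y0 v).

Definition lcoset n (K : word n -> Prop) (w : word n) : word n -> Prop :=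
  fun u => exists k, K k /\ ceq u (w ++ k).

Definition lmul n (i : 'I_n) (P : word n -> Prop) : word n -> Prop :=
  fun u => exists v, P v /\ ceq u (i :: v).

Lemma lmul_lcoset n (K : word n -> Prop) (i : 'I_n) (w : word n) :
  lmul i (lcoset K w) = lcoset K (i :: w).
Proof.
apply: functional_extensionality => u; apply: propositional_extensionality.
split.
- case=> v [[k [Kk Hv]] Hu]; exists k; split=> //.
  exact: ceq_trans Hu (ceq_cons i Hv).
- case=> k [Kk Hu]; exists (w ++ k); split=> //.
  by exists k; split=> //; apply: ceq_refl.
Qed.

Definition coset_flag n (K : word n -> Prop) :=
  {P : word n -> Prop | exists w, P = lcoset K w}.

Lemma coset_adj_proof n (K : word n -> Prop) (i : 'I_n) (P : coset_flag K) :
  exists w, lmul i (sval P) = lcoset K w.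
Proof. case: P => /= P [w ->]; exists (i :: w); exact: lmul_lcoset. Qed.

Definition coset_premaniplex n (K : word n -> Prop) : premaniplex n :=
  @Premaniplex n (coset_flag K)
    (fun i P => exist _ (lmul i (sval P)) (coset_adj_proof i P)).

Definition Zups n m (Y : premaniplex m) (eta : Y -> word m -> word n)
    (y0 : Y) (u : word m) : premaniplex n :=
  coset_premaniplex
    (zeta_img eta y0 (fun w => stab y0 w /\ conj_set (stab y0) u w)).

(* Let g be an automorphism of X ⋊_η Y and y1 the Y-coordinate of g(x0, y0),
   say y1 = v y0.  If l ∈ L and ζ(l) fixes x0, then l fixes (x0, y0), hence
   fixes g(x0, y0), so l ∈ Stab(y1) = L^(v^-1).  Since the operator preserves
   connectivity, ζ maps L onto C^n (apply it to the universal premaniplex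
   C^n/1), so Stab(x0) ⊆ ζ(L ∩ L^(v^-1)) and X covers Z_(v^-1).  By hypothesis
   v^-1 normalises L, i.e. L fixes y1, and then the Y-coordinate of g(x, y)
   depends only on y. *)
From mathcomp Require Import all_boot.
From Stdlib Require Import Relations PropExtensionality FunctionalExtensionality.
From Stdlib Require Import ProofIrrelevance ClassicalEpsilon.

Set Implicit Arguments.
Unset Strict Implicit.
Unset Printing Implicit Defensive.

Section Words.

Variable n : nat.
Implicit Types a b c w : word n.

Lemma far_sym (i j : 'I_n) : far i j -> far j i.
Proof. by rewrite /far orbC. Qed.

Lemma ceq_sym a b : ceq a b -> ceq b a.
Proof. exact: rst_sym. Qed.

Lemma ceq_catl a a' b : ceq a a' -> ceq (a ++ b) (a' ++ b).
Proof.
elim=> {a a'} [a a' s | a | a a' _ IH | a1 a2 a3 _ IH1 _ IH2].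
- apply: rst_step; case: s => [u v j | u v j k h]; rewrite -!catA.
  + exact: (cstep_sq u (v ++ b) j).
  + exact: (cstep_far u (v ++ b) h).
- exact: rst_refl.
- exact: rst_sym.
- exact: rst_trans IH1 IH2.
Qed.

Lemma ceq_catr c b b' : ceq b b' -> ceq (c ++ b) (c ++ b').
Proof. by elim: c => [|i c IH] //= H; apply: ceq_cons (IH H). Qed.

Lemma ceq_cat a a' b b' : ceq a a' -> ceq b b' -> ceq (a ++ b) (a' ++ b').
Proof. by move=> Ha Hb; apply: ceq_trans (ceq_catl _ Ha) (ceq_catr _ Hb). Qed.

Lemma ceq_mulKVw b c : ceq (b ++ rev b ++ c) c.
Proof.
elim: b c => [|i b IH] c /=; first exact: ceq_refl.
rewrite rev_cons -cats1 -catA.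
apply: ceq_trans (ceq_cons i (IH ([:: i] ++ c))) _.
exact: rst_step (cstep_sq [::] c i).
Qed.

Lemma ceq_mulKw b c : ceq (rev b ++ b ++ c) c.
Proof. by have := ceq_mulKVw (rev b) c; rewrite revK. Qed.

End Words.

Section Action.

Variables (n : nat) (X : premaniplex n).
Hypothesis HX : is_premaniplex X.
Implicit Types (a b : word n) (x : X).

Lemma act_cat a b x : act (a ++ b) x = act a (act b x).
Proof. by rewrite /act foldr_cat. Qed.

Lemma act_ceq a b x : ceq a b -> act a x = act b x.
Proof.
case: HX => adjK adj_far.
elim=> {a b} [a b s | a | a b _ IH | a1 a2 a3 _ IH1 _ IH2] //; last by rewrite IH1.
case: s => [u v j | u v j k h]; rewrite !act_cat /=; congr act.
- exact: adjK.
- exact: adj_far (far_sym h).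
Qed.

Lemma act_revK a x : act (rev a) (act a x) = x.
Proof.
by have := ceq_mulKw a [::]; rewrite cats0 -act_cat => /act_ceq ->.
Qed.

Lemma act_revKV a x : act a (act (rev a) x) = x.
Proof. by have := act_revK (rev a) x; rewrite revK. Qed.

Lemma act_morph (g : X -> X) a x :
  (forall i x, g (adj i x) = adj i (g x)) -> g (act a x) = act a (g x).
Proof. by move=> Hg; elim: a => //= i a <-; rewrite Hg. Qed.

Lemma conj_set_stab (x0 : X) a w :
  conj_set (stab x0) (rev a) w <-> stab (act a x0) w.
Proof.
rewrite /stab; split.
- case=> l [Hl Hw]; rewrite revK in Hw.
  by rewrite (act_ceq _ Hw) !act_cat act_revK Hl.
- move=> Hw; exists (rev a ++ w ++ a); split.
  + by rewrite !act_cat Hw act_revK.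
  + rewrite revK -!catA; apply: ceq_sym.
    apply: ceq_trans (ceq_mulKVw a (w ++ a ++ rev a)) _.
    by have := ceq_catr w (ceq_mulKVw a [::]); rewrite !cats0.
Qed.

End Action.

Lemma morph_inv n (X : premaniplex n) (g h : X -> X) :
  cancel g h -> cancel h g ->
  (forall i x, g (adj i x) = adj i (g x)) -> forall i x, h (adj i x) = adj i (h x).
Proof. by move=> gK hK Hg i x; apply: (can_inj gK); rewrite Hg !hK. Qed.

Section Cosets.

Variables (n : nat) (K : word n -> Prop).

Lemma lcoset_ceq a b : ceq a b -> lcoset K a = lcoset K b.
Proof.
move=> Hab; apply: functional_extensionality => u; apply: propositional_extensionality.
split; case=> k [Kk Hu]; exists k; split=> //.
- exact: ceq_trans Hu (ceq_catl _ Hab).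
- exact: ceq_trans Hu (ceq_catl _ (ceq_sym Hab)).
Qed.

Lemma coset_flag_eq (P Q : coset_flag K) : sval P = sval Q -> P = Q.
Proof.
by case: P Q => P HP [Q HQ] /= E; subst Q; congr exist; apply: proof_irrelevance.
Qed.

Lemma coset_flag_repr (P : coset_flag K) : exists w, sval P = lcoset K w.
Proof. by case: P. Qed.

Lemma act_coset a (P : coset_premaniplex K) w :
  sval P = lcoset K w -> sval (act a P) = lcoset K (a ++ w).
Proof. by move=> HP; elim: a => [|i a IH] //=; rewrite IH lmul_lcoset. Qed.

Lemma coset_premaniplexP : is_premaniplex (coset_premaniplex K).
Proof.
split=> [i P | i j P h]; apply: coset_flag_eq; have [w Hw] := coset_flag_repr P.
- change (sval (act [:: i; i] P) = sval P).
  rewrite (act_coset _ Hw) Hw; apply: lcoset_ceq.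
  exact: rst_step (cstep_sq [::] w i).
- change (sval (act [:: j; i; j; i] P) = sval P).
  rewrite (act_coset _ Hw) Hw; apply: lcoset_ceq.
  exact: rst_step (cstep_far [::] w (far_sym h)).
Qed.

Lemma coset_connected : connected (coset_premaniplex K).
Proof.
move=> P Q; have [a Ha] := coset_flag_repr P; have [b Hb] := coset_flag_repr Q.
exists (b ++ rev a); apply: coset_flag_eq; rewrite (act_coset _ Ha) Hb -catA.
by apply: lcoset_ceq; have := ceq_catr b (ceq_mulKw a [::]); rewrite !cats0.
Qed.

Lemma covers_coset_premaniplex (X : premaniplex n) (x0 : X) :
  is_premaniplex X -> connected X ->
  (forall w, stab x0 w -> K w) ->
  (forall k k', K k -> K k' -> K (k ++ k')) ->
  covers X (coset_premaniplex K).
Proof.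
move=> HX HXc stabK K_cat.
have coset_sub a b : act a x0 = act b x0 -> forall u, lcoset K a u -> lcoset K b u.
  move=> Hab u [k [Kk Hu]]; exists (rev b ++ a ++ k); split.
  - rewrite catA; apply: K_cat Kk; apply: stabK.
    by rewrite /stab act_cat Hab act_revK.
  - by apply: ceq_trans Hu _; apply: ceq_sym; apply: ceq_mulKVw.
have coset_eq a b : act a x0 = act b x0 -> lcoset K a = lcoset K b.
  move=> Hab; apply: functional_extensionality => u.
  by apply: propositional_extensionality; split; apply: coset_sub.
pose path_to x := constructive_indefinite_description _ (HXc x0 x).
pose f x : coset_premaniplex K :=
  exist _ (lcoset K (proj1_sig (path_to x))) (ex_intro _ _ erefl).
exists f; split=> [i x | P].
- apply: coset_flag_eq => /=; rewrite lmul_lcoset; apply: coset_eq.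
  by rewrite /= (proj2_sig (path_to (adj i x))) (proj2_sig (path_to x)).
- have [w Hw] := coset_flag_repr P; exists (act w x0); apply: coset_flag_eq => /=.
  by rewrite Hw; apply: coset_eq; rewrite (proj2_sig (path_to _)).
Qed.

End Cosets.

Section Voltages.

Variables (n m : nat) (Y : premaniplex m) (eta : Y -> word m -> word n).
Hypothesis HV : voltage_assignment eta.

Lemma act_eta_nil (X : premaniplex n) (y : Y) (x : X) :
  is_premaniplex X -> act (eta y [::]) x = x.
Proof.
move=> HX; have [_ eta_cat] := HV.
have idem : act (eta y [::]) x = act (eta y [::]) (act (eta y [::]) x).
  by rewrite -act_cat; apply: (act_ceq HX); apply: (eta_cat y [::] [::]).
by rewrite -{2}(act_revK HX (eta y [::]) x) {2}idem act_revK.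
Qed.

Lemma act_mix_snd (X : premaniplex n) a (p : mix X Y eta) :
  (act a p).2 = act a p.2.
Proof. by elim: a => //= i a ->. Qed.

Lemma act_mix (X : premaniplex n) a (x : X) (y : Y) :
  is_premaniplex X -> act a ((x, y) : mix X Y eta) = (act (eta y a) x, act a y).
Proof.
move=> HX; elim: a => [|i a IH] /=; first by rewrite act_eta_nil.
rewrite IH /=; congr pair; rewrite -act_cat; apply: (act_ceq HX).
by apply: ceq_sym; apply: HV.2 y a [:: i].
Qed.

Lemma zeta_surjective (y0 : Y) :
  preserves_connectivity eta -> forall w, exists2 l, stab y0 l & ceq w (eta y0 l).
Proof.
move=> HC w; pose triv (k : word n) := ceq k [::].
pose coset_of u : coset_premaniplex triv := exist _ (lcoset triv u) (ex_intro _ u erefl).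
have [l] := HC _ (coset_premaniplexP triv) (@coset_connected _ triv)
  (coset_of [::], y0) (coset_of w, y0).
rewrite act_mix; last exact: coset_premaniplexP.
case=> /(f_equal sval) E1 E2; exists l => //.
rewrite (@act_coset _ _ _ _ [::]) //= cats0 in E1.
have : lcoset triv w w by exists [::]; rewrite cats0; split; apply: ceq_refl.
rewrite -E1 => -[k [Hk Hw]]; apply: ceq_trans Hw _.
by have := ceq_catr (eta y0 l) Hk; rewrite cats0.
Qed.

Lemma zeta_img_cat (y0 : Y) (S : word m -> Prop) :
  (forall l, S l -> stab y0 l) -> (forall l l', S l -> S l' -> S (l ++ l')) ->
  forall k k', zeta_img eta y0 S k -> zeta_img eta y0 S k' ->
  zeta_img eta y0 S (k ++ k').
Proof.
move=> S_stab S_cat k k' [l [Sl Hk]] [l' [Sl' Hk']]; exists (l ++ l'); split.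
- exact: S_cat.
- have := HV.2 y0 l' l; rewrite (S_stab _ Sl') => Hc.
  by apply: ceq_trans (ceq_cat Hk Hk') (ceq_sym Hc).
Qed.

End Voltages.

Section Lifting.

Variables (n m : nat) (X : premaniplex n) (x0 : X).
Variables (Y : premaniplex m) (eta : Y -> word m -> word n) (y0 : Y).
Hypotheses (HX : is_premaniplex X) (HXc : connected X) (HY : is_premaniplex Y).
Hypotheses (HV : voltage_assignment eta) (HC : preserves_connectivity eta).
Hypothesis no_cover : forall u : word m, ~ in_normaliser (stab y0) u ->
  ~ covers X (Zups eta y0 u).

Variable g : mix X Y eta -> mix X Y eta.
Hypothesis g_adj : forall i p, g (adj i p) = adj i (g p).

Let y1 := (g (x0, y0)).2.

Lemma zeta_stab_sub_stab_image l :
  stab y0 l -> stab x0 (eta y0 l) -> stab y1 l.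
Proof.
move=> Hy Hx; have := act_morph l ((x0, y0) : mix X Y eta) g_adj.
by rewrite act_mix // Hy Hx /stab /y1 -act_mix_snd => <-.
Qed.

Lemma covers_Zups v : act v y0 = y1 -> covers X (Zups eta y0 (rev v)).
Proof.
move=> Hv; apply: (covers_coset_premaniplex (x0 := x0) HX HXc).
- move=> w Hw; have [l Hl Hwl] := zeta_surjective HV y0 HC w.
  exists l; split=> //; split=> //; apply/(conj_set_stab HY); rewrite Hv.
  by apply: zeta_stab_sub_stab_image; rewrite // /stab -(act_ceq _ _ Hwl).
- apply: (zeta_img_cat HV) => [l [] // | l l' [Hl Hlv] [Hl' Hl'v]].
  split; first by rewrite /stab act_cat Hl' Hl.
  move/(conj_set_stab HY): Hlv; move/(conj_set_stab HY): Hl'v => Hl'v Hlv.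
  by apply/(conj_set_stab HY); rewrite /stab act_cat Hl'v Hlv.
Qed.

Lemma stab_sub_stab_image l : stab y0 l -> stab y1 l.
Proof.
have [v] := HC HX HXc (x0, y0) (x0, y1); rewrite act_mix // => -[_ Hv].
have : in_normaliser (stab y0) (rev v).
  by apply: NNPP => Hn; apply: no_cover Hn (covers_Zups Hv).
by move=> Hnorm Hl; rewrite -Hv -(conj_set_stab HY); apply/Hnorm.
Qed.

Lemma morph_snd_indep x y : (g (x, y)).2 = (g (x0, y)).2.
Proof.
have [a] := HC HX HXc (x0, y0) (x, y); rewrite act_mix // => -[Ea1 Ea2].
have [b] := HC HX HXc (x0, y0) (x0, y); rewrite act_mix // => -[Eb1 Eb2].
have -> : (x, y) = act a ((x0, y0) : mix X Y eta) by rewrite act_mix // Ea1 Ea2.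
have -> : (x0, y) = act b ((x0, y0) : mix X Y eta) by rewrite act_mix // Eb1 Eb2.
rewrite !act_morph // !act_mix_snd -/y1.
have : stab y0 (rev b ++ a) by rewrite /stab act_cat Ea2 -Eb2 act_revK.
move/stab_sub_stab_image; rewrite /stab act_cat => Hy1.
by rewrite -[in RHS]Hy1 act_revKV.
Qed.

Lemma morph_snd_adj i y : (g (x0, adj i y)).2 = adj i (g (x0, y)).2.
Proof.
rewrite -(morph_snd_indep (act (eta y [:: i]) x0)).
by rewrite -[(act _ x0, adj i y)]/(adj i ((x0, y) : mix X Y eta)) g_adj.
Qed.

End Lifting.

Theorem theorem6p9 (n m : nat) (X : premaniplex n) (x0 : X)
    (Y : premaniplex m) (eta : Y -> word m -> word n) (y0 : Y) :
  is_premaniplex X -> connected X ->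
  voltage_operator eta -> preserves_connectivity eta ->
  (forall u : word m, ~ in_normaliser (stab y0) u ->
     ~ covers X (Zups eta y0 u)) ->
  forall g : mix X Y eta -> mix X Y eta, is_automorphism g ->
    exists tau : Y -> Y, is_automorphism tau /\ is_lift g tau.
Proof.
move=> HX HXc [HY [HV _]] HC no_cover g [[h gK hK] g_adj].
have indep := morph_snd_indep x0 HX HXc HY HV HC no_cover.
have g_indep := indep _ g_adj; have h_indep := indep _ (morph_inv gK hK g_adj).
exists (fun y => (g (x0, y)).2); split; last by case=> x y; apply: g_indep.
split; last exact: (morph_snd_adj x0 HX HXc HY HV HC no_cover g_adj).
exists (fun y => (h (x0, y)).2) => y /=.
- by rewrite -(h_indep (g (x0, y)).1) -surjective_pairing gK.
- by rewrite -(g_indep (h (x0, y)).1) -surjective_pairing hK.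
Qed.
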